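(* Let $\nu<0$ and define $\mathcal{R}_\nu:\mathbb{R}\to\mathbb{R}$ by $$\mathcal{R}_\nu(x):=\frac{(H_{\nu-1}(x))^2}{H_{\nu}(x)\,H_{\nu-2}(x)},\qquad x\in\mathbb{R},$$ where $H_\alpha$ denotes the Hermite function of index $\alpha$. Then $$1<\mathcal{R}_\nu(x)<\frac{\nu-1}{\nu}\qquad\text{for all }x\in\mathbb{R}.$$ In particular, the Turán-type inequality $$H_{\nu-1}(x)^2-H_{\nu}(x)H_{\nu-2}(x)>0$$ holds for all $x\in\mathbb{R}$.
   Context: For $\alpha<0$, the Hermite function $H_\alpha:\mathbb{R}\to\mathbb{R}$ is the solution of the ODE $u''(x)-2xu'(x)+2\alpha u(x)=0$ given by the integral representation $$H_\alpha(x)=\frac{1}{\Gamma(-\alpha)}\int_0^\infty t^{-\alpha-1}e^{-t^2-2xt}\,dt,\qquad x\in\mathbb{R},$$ where $\Gamma$ is Euler's Gamma function. In particular $H_\alpha(x)>0$ for all $x$ when $\alpha<0$. *)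

From mathcomp Require Import all_boot all_order all_algebra.
From mathcomp Require Import all_classical all_reals all_analysis.
Import Order.TTheory GRing.Theory Num.Theory.
Local Open Scope classical_set_scope.
Local Open Scope ring_scope.

Definition Gamma {R : realType} (s : R) : R :=
  Rintegral (@lebesgue_measure R) `[0%R, +oo[%classic
    (fun t => t `^ (s - 1) * expR (- t)).

(* Hermite function, alpha < 0:
   H_alpha(x) = 1/Gamma(-alpha) * \int_0^oo t^(-alpha-1) e^(-t^2 - 2 x t) dt *)
Definition Hermite {R : realType} (alpha x : R) : R :=
  (Gamma (- alpha))^-1 *
  Rintegral (@lebesgue_measure R) `[0%R, +oo[%classic
    (fun t => t `^ (- alpha - 1) * expR (- t ^+ 2 - 2 * x * t)).

Definition Rratio {R : realType} (nu x : R) : R :=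
  (Hermite (nu - 1) x) ^+ 2 / (Hermite nu x * Hermite (nu - 2) x).

From mathcomp Require Import all_boot all_order all_algebra.
From mathcomp Require Import all_classical all_reals all_analysis.
From mathcomp Require Import ring lra measurable_realfun.
Import Order.TTheory GRing.Theory Num.Theory.
Import numFieldNormedType.Exports.

Set Implicit Arguments.
Unset Strict Implicit.
Unset Printing Implicit Defensive.

Local Open Scope classical_set_scope.
Local Open Scope ring_scope.

(* Write s = - nu > 0 and M a = \int_0^oo t ^ (a - 1) exp (- t ^ 2 - 2 x t) dt,
   so that H_(- a)(x) = M a / Gamma a and, by Gamma (a + 1) = a Gamma a,
   R_nu(x) = (s + 1) M (s + 1) ^ 2 / (s M s M (s + 2)).
   Integrating by parts gives the three-term recurrence
   a M a = 2 M (a + 2) + 2 x M (a + 1), and the Cauchy-Schwarz inequality gives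
   strict log-convexity M (a + 1) ^ 2 < M a M (a + 2).  Log-convexity at s is the
   upper bound; the recurrence at s and s + 1 turns (s + 1) M (s + 1) ^ 2 - s M s M (s + 2)
   into 2 (M (s + 1) M (s + 3) - M (s + 2) ^ 2) > 0, which is the lower bound, and the
   Turan inequality is the lower bound multiplied by H_nu H_(nu - 2) > 0.
   The integrals are Lebesgue integrals over ]0, +oo[; integrability and the
   fundamental theorem of calculus there are obtained by exhausting ]0, +oo[ with
   compact windows (monotone, resp. dominated, convergence). *)

Section moments.
Context {R : realType}.
Implicit Types (f g : R -> R) (t df dg : R).
Local Notation mu := (@lebesgue_measure R).
Local Notation itv0y := (`]0%R, +oo[%classic : set R).

Lemma is_derive_continuous f t df : is_derive t 1 f df -> {for t, continuous f}.
Proof. by move=> [/derivable1_diffP/differentiable_continuous]. Qed.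

Lemma is_derive_mul f g t df dg : is_derive t 1 f df -> is_derive t 1 g dg ->
  is_derive t 1 (fun y => f y * g y) (df * g t + f t * dg).
Proof.
move=> f_der g_der; apply: is_derive_eq (is_deriveM f_der g_der) _.
by change (f t * dg + g t * df = df * g t + f t * dg); ring.
Qed.

Lemma is_derive_expR_comp f t df : is_derive t 1 f df ->
  is_derive t 1 (fun y => expR (f y)) (expR (f t) * df).
Proof. exact: is_derive1_comp. Qed.

Lemma continuous_powR (a t : R) : 0 < t -> {for t, continuous (fun y : R => y `^ a)}.
Proof. by move=> t_gt0; exact: is_derive_continuous (is_derive1_powR a t_gt0). Qed.

Lemma powRD1 (t b : R) : 0 < t -> t `^ (b + 1) = t * t `^ b.
Proof.
move=> t_gt0; rewrite powRD; last by apply/implyP => _; rewrite gt_eqF.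
by rewrite powRr1 ?(ltW t_gt0)// mulrC.
Qed.

Lemma powR_le_expR_half (a : R) :
  exists2 K : R, 0 <= K & forall t, 1 <= t -> t `^ a <= K * expR (t / 2).
Proof.
set n := Num.bound `|a|; have a_lt_n : `|a| < n%:R := archi_boundP (normr_ge0 a).
exists (2 ^+ n.+1 * n.+1`!%:R); first by rewrite mulr_ge0// exprn_ge0.
move=> t t_ge1; have t_ge0 : 0 <= t := le_trans ler01 t_ge1.
apply: (@le_trans _ _ (t `^ n.+1%:R)).
  apply: ler_powR => //; apply: le_trans (ler_norm a) _.
  by apply: le_trans (ltW a_lt_n) _; rewrite ler_nat.
have exp_ge := expR_ge1Dxn n (divr_ge0 t_ge0 (ler0n R 2)).
rewrite powR_mulrn// -[t in t ^+ _](@divfK _ 2)// exprMn mulrC -mulrA.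
rewrite ler_pM2l ?exprn_gt0// -ler_pdivrMl ?ltr0n ?fact_gt0//.
by apply: le_trans exp_ge; rewrite mulrC lerDr.
Qed.

Definition window_lo (n : nat) : R := n.+1%:R^-1.
Definition window_hi (n : nat) : R := n.+2%:R.
Definition window (n : nat) : set R := `[window_lo n, window_hi n].

Lemma window_lo_gt0 n : 0 < window_lo n.
Proof. by rewrite invr_gt0 ltr0n. Qed.

Lemma window_lo_lt_hi n : window_lo n < window_hi n.
Proof. by rewrite (@le_lt_trans _ _ 1) ?ltr1n// invf_le1 ?ler1n ?ltr0n. Qed.

Lemma window_sub_itv0y n : window n `<=` itv0y.
Proof.
move=> x; rewrite /window/= !in_itv/= andbT => /andP[lox _].
exact: lt_le_trans (window_lo_gt0 n) lox.
Qed.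

Lemma window_nondecreasing n m : (n <= m)%N -> window n `<=` window m.
Proof.
move=> nm x; rewrite /window/= !in_itv/= => /andP[lox xhi]; apply/andP; split.
  by apply: le_trans lox; rewrite lef_pV2 ?posrE ?ltr0n// ler_nat.
by apply: le_trans xhi _; rewrite ler_nat.
Qed.

Lemma window_lo_cvg : window_lo n @[n --> \oo] --> (0 : R).
Proof. exact: cvg_harmonic. Qed.

Lemma window_hi_cvg : window_hi n @[n --> \oo] --> +oo.
Proof.
apply/cvgryPge => A; near=> n.
apply: le_trans (ler_norm A) _; apply: le_trans (ltW (archi_boundP (normr_ge0 A))) _.
by rewrite /window_hi ler_nat ltnW// ltnS; near: n; exact: nbhs_infty_ge.
Unshelve. all: by end_near. Qed.

Lemma window_eventually x : 0 < x -> \forall n \near \oo, window n x.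
Proof.
move=> x_gt0; near=> n; rewrite /window/= in_itv/=; apply/andP; split.
  by apply/ltW; near: n; exact: cvgr_lt window_lo_cvg _ x_gt0.
by near: n; move/cvgryPge: window_hi_cvg; apply.
Unshelve. all: by end_near. Qed.

Lemma measurable_fun_itv0y (f : R -> R) :
  (forall t, 0 < t -> {for t, continuous f}) -> measurable_fun itv0y f.
Proof.
move=> f_cont; apply: open_continuous_measurable_fun => // t /[1!inE] /=.
by rewrite in_itv/= andbT; exact: f_cont.
Qed.

Section primitive_on_itv0y.
Variables f F : R -> R.
Hypothesis f_cont : forall t : R, 0 < t -> {for t, continuous f}.
Hypothesis F_deriv : forall t : R, 0 < t -> is_derive t 1 F (f t).

Lemma integral_window n :
  (\int[mu]_(x in window n) (f x)%:E = (F (window_hi n) - F (window_lo n))%:E)%E.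
Proof.
have lo_gt0 := window_lo_gt0 n; have lohi := window_lo_lt_hi n.
have F_cont t : 0 < t -> {for t, continuous F} by move=> /F_deriv/is_derive_continuous.
rewrite EFinB; apply: continuous_FTC2 => //.
- apply: continuous_in_subspaceT => x /[1!inE] /window_sub_itv0y /=.
  by rewrite in_itv/= andbT; exact: f_cont.
- split.
  + move=> x; rewrite in_itv/= => /andP[lox _].
    by case: (F_deriv (lt_trans lo_gt0 lox)).
  + exact/cvg_at_right_filter/F_cont.
  + exact/cvg_at_left_filter/F_cont/(lt_trans lo_gt0).
- move=> x; rewrite in_itv/= => /andP[lox _].
  by have := F_deriv (lt_trans lo_gt0 lox); rewrite derive1E => -[_ ->].
Qed.

Lemma integral_itv0y_window n :
  (\int[mu]_(x in itv0y) ((EFin \o f) \_ (window n)) x =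
   \int[mu]_(x in window n) (f x)%:E)%E.
Proof. by rewrite -integral_mkcondr setIidr//; exact: window_sub_itv0y. Qed.

Let mf : measurable_fun itv0y (EFin \o f).
Proof. by apply/measurable_EFinP; exact: measurable_fun_itv0y f_cont. Qed.

Let mf_window n : measurable_fun itv0y ((EFin \o f) \_ (window n)).
Proof.
apply/measurable_restrict; [exact: measurable_itv | exact: measurable_itv |].
by apply: measurable_funS mf; [exact: measurable_itv | exact: subIsetl].
Qed.

Let window_restrict_cvg x : itv0y x ->
  (EFin \o f) \_ (window n) x @[n --> \oo] --> (f x)%:E.
Proof.
rewrite /= in_itv/= andbT => x_gt0; apply: cvg_near_cst.
by near=> n; rewrite patchE mem_set//; near: n; exact: window_eventually.
Unshelve. all: by end_near. Qed.

Lemma integrable_itv0y_bounded_primitive (m M : R) :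
  (forall t : R, 0 < t -> 0 <= f t) -> (forall t : R, 0 < t -> m <= F t <= M) ->
  mu.-integrable itv0y (EFin \o f).
Proof.
move=> f_ge0 F_bnd; apply/integrableP; split => //.
pose g n := (EFin \o f) \_ (window n).
have g_ge0 n x : itv0y x -> (0 <= g n x)%E.
  rewrite /= in_itv/= andbT => x_gt0.
  by rewrite /g patchE; case: ifP => // _; rewrite lee_fin f_ge0.
have g_nd x : itv0y x -> {homo g^~ x : n m / (n <= m)%N >-> (n <= m)%E}.
  move=> x_gt0 n k nk; rewrite /g !patchE; case: ifPn => [/set_mem xn|_].
    by rewrite mem_set//; exact: window_nondecreasing xn.
  by case: ifP => // _; rewrite lee_fin f_ge0//; move: x_gt0; rewrite /= in_itv/= andbT.
have g_cvg := cvg_monotone_convergence (mu := mu) (measurable_itv _) mf_window g_ge0 g_nd.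
have -> : (\int[mu]_(x in itv0y) `|(EFin \o f) x| =
           \int[mu]_(x in itv0y) limn (g^~ x))%E.
  apply: eq_integral => x /[1!inE] x_gt0; rewrite (cvg_lim _ (window_restrict_cvg x_gt0))//.
  by rewrite /= ger0_norm// f_ge0//; move: x_gt0; rewrite /= in_itv/= andbT.
rewrite -(cvg_lim _ g_cvg)//; apply: (@le_lt_trans _ _ (M - m)%:E); last exact: ltey.
apply: lime_le; first exact: cvgP g_cvg.
apply: nearW => n; rewrite /g integral_itv0y_window integral_window lee_fin.
have /andP[_ FhiM] := F_bnd _ (lt_trans (window_lo_gt0 n) (window_lo_lt_hi n)).
have /andP[mFlo _] := F_bnd _ (window_lo_gt0 n).
lra.
Qed.

Lemma Rintegral_itv0y_FTC2 (l0 l : R) : mu.-integrable itv0y (EFin \o f) ->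
  F x @[x --> 0^'+] --> l0 -> F x @[x --> +oo] --> l ->
  \int[mu]_(x in itv0y) f x = l - l0.
Proof.
move=> intf Fl0 Fl; pose g n := (EFin \o f) \_ (window n).
have g_f : {ae mu, forall x, itv0y x -> g^~ x @ \oo --> (EFin \o f) x}.
  by apply: aeW => x; exact: window_restrict_cvg.
have g_le : {ae mu, forall x n, itv0y x -> (`|g n x| <= `|(EFin \o f) x|)%E}.
  apply: aeW => x n _; rewrite /g patchE; case: ifP => // _.
  by rewrite abse0 abse_ge0.
have [_ _ g_cvg] := dominated_convergence (mu := mu) (measurable_itv _) mf_window mf
  g_f (integrable_abse intf) g_le.
have F_cvg : (F (window_hi n) - F (window_lo n))%:E @[n --> \oo] --> (l - l0)%:E.
  apply: cvg_EFin; first exact: nearW.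
  apply: cvgB; first exact: (cvg_pinftyP F l).1 Fl _ window_hi_cvg.
  move/cvg_at_rightP: Fl0; apply; split; first exact: window_lo_gt0.
  exact: window_lo_cvg.
have g_int : (fun n => \int[mu]_(x in itv0y) g n x)%E =
             (fun n => (F (window_hi n) - F (window_lo n))%:E).
  by apply/funext => n; rewrite /g integral_itv0y_window integral_window.
rewrite g_int in g_cvg.
by rewrite /Rintegral (cvg_unique _ g_cvg F_cvg).
Qed.

End primitive_on_itv0y.

Lemma Rintegral_itv0y_gt0 (f : R -> R) (t0 : R) :
  mu.-integrable itv0y (EFin \o f) -> (forall t : R, 0 < t -> 0 <= f t) ->
  0 < t0 -> {for t0, continuous f} -> 0 < f t0 ->
  0 < \int[mu]_(x in itv0y) f x.
Proof.
move=> intf f_ge0 t0_gt0 f_cont ft0_gt0.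
have mf : measurable_fun itv0y (EFin \o f) by case/integrableP: intf.
have ft0_half : 0 < f t0 / 2 by rewrite divr_gt0.
have : \forall x \near t0, 0 < x /\ f t0 / 2 < f x.
  near=> x; split; near: x; first exact: lt_nbhsr.
  have f_cvg : f x @[x --> t0] --> f t0 := f_cont.
  by move/cvgr_gt: f_cvg; apply; rewrite ltr_pdivrMr// ltr_pMr// ltr1n.
move=> /nbhs_ballP[d /= d_gt0 near_t0].
pose W := `[t0 - d / 2, t0 + d / 2].
have W_near x : x \in W -> 0 < x /\ f t0 / 2 < f x.
  rewrite in_itv/= => /andP[lox xhi]; apply: near_t0.
  by rewrite /ball/= ltr_norml; apply/andP; split; lra.
have W_sub : [set` W] `<=` itv0y.
  by move=> x /W_near[x_gt0 _] /=; rewrite in_itv/= x_gt0.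
have : ((f t0 / 2)%:E * mu [set` W] <= \int[mu]_(x in itv0y) (f x)%:E)%E.
  apply: (@le_trans _ _ (\int[mu]_(x in [set` W]) (f x)%:E)%E); last first.
    apply: ge0_subset_integral => //= x; rewrite in_itv/= andbT => x_gt0.
    by rewrite lee_fin f_ge0.
  rewrite -integral_cst//; apply: ge0_le_integral => //.
  - by move=> x _; rewrite lee_fin ltW.
  - exact: measurable_funS mf.
  - by move=> x Wx; rewrite lee_fin ltW//; have [] := W_near x Wx.
rewrite lebesgue_measure_itv/= lte_fin ifT; last lra.
have int_fin : (\int[mu]_(x in itv0y) (f x)%:E)%E \is a fin_num.
  exact: integrable_fin_num.
rewrite -EFinM -(fineK int_fin) lee_fin.
apply: lt_le_trans; apply: mulr_gt0 => //; lra.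
Unshelve. all: by end_near. Qed.

Lemma integrable_itv0yD (f g : R -> R) : mu.-integrable itv0y (EFin \o f) ->
  mu.-integrable itv0y (EFin \o g) -> mu.-integrable itv0y (EFin \o (fun x => f x + g x)).
Proof.
move=> f_int g_int; have := integrableD (mu := mu) (measurable_itv _) f_int g_int.
by apply: (eq_integrable (mu := mu)) => // x _.
Qed.

Lemma integrable_itv0yZ (k : R) (f : R -> R) : mu.-integrable itv0y (EFin \o f) ->
  mu.-integrable itv0y (EFin \o (fun x => k * f x)).
Proof.
move=> f_int; have := integrableZl (mu := mu) (measurable_itv _) k f_int.
by apply: (eq_integrable (mu := mu)) => // x _.
Qed.

Lemma eq_integrable_itv0y (f g : R -> R) : (forall t, 0 < t -> f t = g t) ->
  mu.-integrable itv0y (EFin \o f) -> mu.-integrable itv0y (EFin \o g).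
Proof.
move=> fg; apply: (eq_integrable (mu := mu)) => // t /[1!inE] /=.
by rewrite in_itv/= andbT => /fg ->.
Qed.

Lemma eq_Rintegral_itv0y (f g : R -> R) : (forall t, 0 < t -> f t = g t) ->
  \int[mu]_(x in itv0y) f x = \int[mu]_(x in itv0y) g x.
Proof.
by move=> fg; apply: eq_Rintegral => t /[1!inE] /=; rewrite in_itv/= andbT => /fg.
Qed.

(* Unlike [t ^ (a - 1) * expR (- t)], this majorant has an explicit bounded primitive. *)
Definition gamma_majorant (a K t : R) : R :=
  expR 1 * t `^ (a - 1) * expR (- t `^ a) + K * expR (- (t / 2)).

Lemma integrable_gamma_majorant (a K : R) : 0 < a -> 0 <= K ->
  mu.-integrable itv0y (EFin \o gamma_majorant a K).
Proof.
move=> a_gt0 K_ge0.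
pose G t := - (expR 1 / a) * expR (- t `^ a) - 2 * K * expR (- (t / 2)).
have G_deriv (t : R) : 0 < t -> is_derive t 1 G (gamma_majorant a K t).
  move=> t_gt0; have half := is_derive_mul (is_derive_id t 1) (is_derive_cst (2^-1 : R) t 1).
  apply: is_derive_eq (is_deriveB
    (is_derive_mul (is_derive_cst (- (expR 1 / a)) t 1)
                   (is_derive_expR_comp (is_deriveN (is_derive1_powR a t_gt0))))
    (is_derive_mul (is_derive_cst (2 * K) t 1)
                   (is_derive_expR_comp (is_deriveN half)))) _.
  by rewrite !fctE /gamma_majorant; field; rewrite gt_eqF.
have g_cont (t : R) : 0 < t -> {for t, continuous (gamma_majorant a K)}.
  move=> t_gt0; apply: continuousD; apply: continuousM.
  - by apply: continuousM; [exact: cvg_cst | exact: continuous_powR].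
  - apply: continuous_comp; last exact: continuous_expR.
    by apply: continuousN; exact: continuous_powR.
  - exact: cvg_cst.
  - apply: continuous_comp; last exact: continuous_expR.
    by apply: continuousN; apply: continuousM; [exact: cvg_id | exact: cvg_cst].
apply: (integrable_itv0y_bounded_primitive g_cont G_deriv
  (m := - (expR 1 / a) - 2 * K) (M := 0)).
- by move=> t _; rewrite /gamma_majorant addr_ge0 ?mulr_ge0 ?expR_ge0 ?powR_ge0.
- move=> t t_gt0; have e1_ge0 := expR_ge0 (- t `^ a).
  have e1_le1 : expR (- t `^ a) <= 1 by rewrite expR_le1 oppr_le0 powR_ge0.
  have e2_ge0 := expR_ge0 (- (t / 2)).
  have e2_le1 : expR (- (t / 2)) <= 1 by rewrite expR_le1 oppr_le0 divr_ge0 ?ltW.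
  have ea_ge0 : 0 <= expR 1 / a by rewrite divr_ge0 ?expR_ge0 ?ltW.
  by rewrite /G; apply/andP; split; nra.
Qed.

Lemma powR_expRN_le_gamma_majorant (a K t : R) : 0 < a -> 0 <= K ->
  (forall s, 1 <= s -> s `^ (a - 1) <= K * expR (s / 2)) -> 0 < t ->
  t `^ (a - 1) * expR (- t) <= gamma_majorant a K t.
Proof.
move=> a_gt0 K_ge0 powR_le t_gt0; rewrite /gamma_majorant.
have e1_ge0 := expR_ge0 (- t `^ a).
have p_ge0 := powR_ge0 t (a - 1).
have [t_le1|t_gt1] := leP t 1.
- have ta_le1 : t `^ a <= 1.
    by rewrite -(powRr0 t); apply: ger_powR; [rewrite t_gt0 | exact: ltW].
  have e_ge1 : 1 <= expR 1 * expR (- t `^ a).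
    by rewrite -expRD; apply: le_trans (expR_ge1Dx _); lra.
  have et_le1 : expR (- t) <= 1 by rewrite expR_le1 oppr_le0 ltW.
  have := expR_ge0 (- (t / 2)); nra.
- have et : expR (t / 2) * expR (- t) = expR (- (t / 2)).
    by rewrite -expRD; congr expR; field.
  have : t `^ (a - 1) * expR (- t) <= K * expR (- (t / 2)).
    by rewrite -et mulrA; apply: ler_wpM2r; [exact: expR_ge0 | exact/powR_le/ltW].
  have : 0 <= expR 1 * t `^ (a - 1) * expR (- t `^ a) by rewrite !mulr_ge0 ?expR_ge0.
  lra.
Qed.

Lemma integrable_powR_expRN (a : R) : 0 < a ->
  mu.-integrable itv0y (EFin \o (fun t => t `^ (a - 1) * expR (- t))).
Proof.
move=> a_gt0; have [K K_ge0 powR_le] := powR_le_expR_half (a - 1).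
apply: le_integrable (integrable_gamma_majorant a_gt0 K_ge0) => //.
  apply/measurable_EFinP; apply: measurable_fun_itv0y => t t_gt0.
  apply: continuousM; first exact: continuous_powR.
  by apply: continuous_comp; [exact: continuousN | exact: continuous_expR].
move=> t /=; rewrite in_itv/= andbT => t_gt0.
rewrite lee_fin !ger0_norm ?mulr_ge0 ?powR_ge0 ?expR_ge0//.
  exact: powR_expRN_le_gamma_majorant.
by rewrite /gamma_majorant addr_ge0 ?mulr_ge0 ?powR_ge0 ?expR_ge0.
Qed.

Definition moment (E : R -> R) (a : R) : R :=
  \int[mu]_(t in itv0y) (t `^ (a - 1) * E t).

Section weighted_moments.
Variables (E : R -> R) (C : R).
Hypothesis E_cont : continuous E.
Hypothesis E_gt0 : forall t : R, 0 < t -> 0 < E t.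
Hypothesis E_le : forall t : R, 0 < t -> E t <= C * expR (- t).

Let moment_integrand_cont (a t : R) : 0 < t ->
  {for t, continuous (fun y => y `^ a * E y)}.
Proof. by move=> t_gt0; apply: continuousM; [exact: continuous_powR | exact: E_cont]. Qed.

Lemma integrable_moment (a : R) : 0 < a ->
  mu.-integrable itv0y (EFin \o (fun t => t `^ (a - 1) * E t)).
Proof.
move=> a_gt0; have := integrable_itv0yZ C (integrable_powR_expRN a_gt0).
apply: le_integrable => //.
  by apply/measurable_EFinP; apply: measurable_fun_itv0y => t; exact: moment_integrand_cont.
move=> t /=; rewrite in_itv/= andbT => t_gt0.
have E_t := E_gt0 t_gt0; have p_ge0 := powR_ge0 t (a - 1).
have Ce_ge0 : 0 <= C * expR (- t) by apply: le_trans (E_le t_gt0); exact: ltW.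
rewrite lee_fin mulrCA (ger0_norm (mulr_ge0 p_ge0 (ltW E_t))).
rewrite (ger0_norm (mulr_ge0 p_ge0 Ce_ge0)).
by apply: ler_wpM2l => //; exact: E_le.
Qed.

Lemma moment_gt0 (a : R) : 0 < a -> 0 < moment E a.
Proof.
move=> a_gt0; apply: (Rintegral_itv0y_gt0 (t0 := 1)) => //.
- exact: integrable_moment.
- by move=> t t_gt0; rewrite mulr_ge0 ?powR_ge0 ?ltW ?E_gt0.
- exact: moment_integrand_cont.
- by rewrite powR1 mul1r E_gt0.
Qed.

Let moment_integrand_succ (a t : R) : 0 < t ->
  t `^ (a + 1 - 1) * E t = t * (t `^ (a - 1) * E t).
Proof. by move=> t_gt0; rewrite addrK -[a in t `^ a](subrK 1) powRD1// mulrA. Qed.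

Lemma moment_sqr_lt (a : R) : 0 < a ->
  moment E (a + 1) ^+ 2 < moment E a * moment E (a + 2).
Proof.
move=> a_gt0; have a1_gt0 : 0 < a + 1 by rewrite addr_gt0.
have a2_gt0 : 0 < a + 2 by rewrite addr_gt0.
pose l := moment E (a + 1) / moment E a.
(* The variance of [t] under the weight [t ^ (a - 1) * E t] is positive. *)
pose q t := t `^ (a - 1) * E t * (t - l) ^+ 2.
have qE t : 0 < t -> q t = t `^ (a + 2 - 1) * E t +
    (- (2 * l)) * (t `^ (a + 1 - 1) * E t) + l ^+ 2 * (t `^ (a - 1) * E t).
  move=> t_gt0; have -> : a + 2 = a + 1 + 1 by ring.
  by rewrite /q (moment_integrand_succ (a + 1)) ?(moment_integrand_succ a)//; ring.
have int2 := integrable_moment a2_gt0.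
have int1 := integrable_itv0yZ (- (2 * l)) (integrable_moment a1_gt0).
have int0 := integrable_itv0yZ (l ^+ 2) (integrable_moment a_gt0).
have q_int : mu.-integrable itv0y (EFin \o q).
  apply: eq_integrable_itv0y (integrable_itv0yD (integrable_itv0yD int2 int1) int0).
  by move=> t /qE.
have l1_gt0 : 0 < l + 1 by rewrite addr_gt0// divr_gt0// moment_gt0.
have : 0 < \int[mu]_(t in itv0y) q t.
  apply: (Rintegral_itv0y_gt0 q_int _ l1_gt0).
  - by move=> t t_gt0; rewrite mulr_ge0 ?sqr_ge0// mulr_ge0 ?powR_ge0 ?ltW ?E_gt0.
  - apply: continuousM; first exact: moment_integrand_cont.
    by apply: continuousM; apply: continuousB; (exact: cvg_id || exact: cvg_cst).
  - by rewrite /q addrAC subrr add0r expr1n mulr1 mulr_gt0 ?powR_gt0 ?E_gt0.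
rewrite (eq_Rintegral_itv0y qE) RintegralD//; last exact: integrable_itv0yD.
rewrite RintegralD// !RintegralZl//; try exact: integrable_moment.
rewrite -!/(moment E _) => Q_gt0; have M0_gt0 := moment_gt0 a_gt0.
have := mulr_gt0 M0_gt0 Q_gt0; rewrite /l.
have expand (M0 M1 M2 : R) : M0 != 0 ->
    M0 * (M2 + - (2 * (M1 / M0)) * M1 + (M1 / M0) ^+ 2 * M0) = M0 * M2 - M1 ^+ 2.
  by move=> M0_neq0; field.
by rewrite expand ?gt_eqF// subr_gt0.
Qed.

Let powR_mul_weight_cvg0 (a : R) : 0 < a -> t `^ a * E t @[t --> 0^'+] --> 0.
Proof.
move=> a_gt0; rewrite -[X in _ --> X](mul0r (E 0)); apply: cvgM.
  exact: powR_cvg0.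
exact/cvg_at_right_filter/E_cont.
Qed.

Let powR_mul_weight_cvgy (a : R) : t `^ a * E t @[t --> +oo] --> 0.
Proof.
have [K K_ge0 powR_le] := powR_le_expR_half a.
apply: (@squeeze_cvgr _ _ _ _ (fun=> 0) (fun t => C * K * expR (- (t / 2)))).
- near=> t; have t_ge1 : 1 <= t by near: t; apply: nbhs_pinfty_ge; rewrite num_real.
  have t_gt0 : 0 < t := lt_le_trans ltr01 t_ge1.
  have E_t := E_le t_gt0; have p_ge0 := powR_ge0 t a.
  have Ce_ge0 : 0 <= C * expR (- t) by apply: le_trans E_t; exact/ltW/E_gt0.
  rewrite mulr_ge0 ?(ltW (E_gt0 t_gt0))//=.
  apply: le_trans (ler_wpM2l p_ge0 E_t) _.
  apply: le_trans (ler_wpM2r Ce_ge0 (powR_le t t_ge1)) _.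
  rewrite mulrCA !mulrA -mulrA -expRD [C * K]mulrC.
  by have -> : t / 2 + - t = - (t / 2) by field.
- exact: cvg_cst.
- rewrite -(mulr0 (C * K)); apply: cvgM; first exact: cvg_cst.
  apply: (cvg_comp (fun t : R => t / 2) (fun x => expR (- x))); last exact: cvgr_expR.
  apply/cvgryPge => A; near=> t.
  by rewrite ler_pdivlMr//; near: t; apply: nbhs_pinfty_ge; rewrite num_real.
Unshelve. all: by end_near. Qed.

Lemma moment_derive (E' : R -> R) (a : R) : 0 < a ->
  (forall t : R, is_derive t 1 E (E' t)) -> (forall t : R, 0 < t -> {for t, continuous E'}) ->
  mu.-integrable itv0y (EFin \o (fun t => t `^ a * E' t)) ->
  moment E' (a + 1) = - (a * moment E a).
Proof.
move=> a_gt0 E_deriv E'_cont E'_int.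
pose f t := a * (t `^ (a - 1) * E t) + t `^ a * E' t.
have F_deriv (t : R) : 0 < t -> is_derive t 1 (fun y => y `^ a * E y) (f t).
  move=> t_gt0; apply: is_derive_eq (is_derive_mul (is_derive1_powR a t_gt0) (E_deriv t)) _.
  by rewrite /f mulrA.
have f_cont (t : R) : 0 < t -> {for t, continuous f}.
  move=> t_gt0; apply: continuousD.
    by apply: continuousM; [exact: cvg_cst | exact: moment_integrand_cont].
  by apply: continuousM; [exact: continuous_powR | exact: E'_cont].
have M_int := integrable_moment a_gt0.
have f_int := integrable_itv0yD (integrable_itv0yZ a M_int) E'_int.
have := Rintegral_itv0y_FTC2 f_cont F_deriv f_int (powR_mul_weight_cvg0 a_gt0)
  (powR_mul_weight_cvgy a).
rewrite subrr RintegralD// ?RintegralZl//; last exact: integrable_itv0yZ.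
have -> : moment E' (a + 1) = \int[mu]_(t in itv0y) (t `^ a * E' t).
  by apply: eq_Rintegral_itv0y => t _; rewrite addrK.
by move/eqP; rewrite addrC addr_eq0 => /eqP.
Qed.

End weighted_moments.

Lemma Rintegral_itv0y_cbnd (f : R -> R) : mu.-integrable itv0y (EFin \o f) ->
  \int[mu]_(t in `[0%R, +oo[) f t = \int[mu]_(t in itv0y) f t.
Proof. by move=> f_int; rewrite -Rintegral_itv_obnd_cbnd. Qed.

Let expRN_cont : continuous (fun t : R => expR (- t)).
Proof. by move=> t; apply: continuous_comp; [exact: continuousN | exact: continuous_expR]. Qed.

Let expRN_gt0 (t : R) : 0 < t -> 0 < expR (- t).
Proof. by move=> _; exact: expR_gt0. Qed.

Let expRN_le (t : R) : 0 < t -> expR (- t) <= 1 * expR (- t).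
Proof. by rewrite mul1r. Qed.

Lemma Gamma_moment (a : R) : 0 < a -> Gamma a = moment (fun t => expR (- t)) a.
Proof.
move=> a_gt0; rewrite /Gamma Rintegral_itv0y_cbnd//.
exact: (integrable_moment expRN_cont expRN_gt0 expRN_le).
Qed.

Lemma Gamma_gt0 (a : R) : 0 < a -> 0 < Gamma a.
Proof.
move=> a_gt0; rewrite Gamma_moment//.
exact: (moment_gt0 expRN_cont expRN_gt0 expRN_le).
Qed.

Lemma Gamma_succ (a : R) : 0 < a -> Gamma (a + 1) = a * Gamma a.
Proof.
move=> a_gt0; have a1_gt0 : 0 < a + 1 by rewrite addr_gt0.
have expRN_deriv (t : R) : is_derive t 1 (fun y => expR (- y)) (- expR (- t)).
  by apply: is_derive_eq (is_derive_expR_comp (is_deriveNid t 1)) _; rewrite mulrN1.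
have M_int := integrable_moment expRN_cont expRN_gt0 expRN_le a1_gt0.
have E'_int : mu.-integrable itv0y (EFin \o (fun t => t `^ a * - expR (- t))).
  apply: eq_integrable_itv0y (integrable_itv0yZ (-1) M_int) => t _.
  by rewrite addrK mulrN mulN1r.
have := moment_derive expRN_cont expRN_gt0 expRN_le a_gt0 expRN_deriv
  (fun t _ => continuousN (@expRN_cont t)) E'_int.
rewrite !Gamma_moment// => M'_eq; apply: oppr_inj; rewrite -M'_eq -mulN1r.
rewrite /moment -RintegralZl//; apply: eq_Rintegral_itv0y => t _.
by rewrite mulN1r mulrN.
Qed.

Definition hermite_weight (x t : R) : R := expR (- t ^+ 2 - 2 * x * t).

Section hermite_weight.
Variable x : R.
Local Notation E := (hermite_weight x).
Local Notation M := (moment E).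

Let E_cont : continuous E.
Proof.
move=> t; apply: continuous_comp; last exact: continuous_expR.
apply: continuousB; first by apply: continuousN; apply: continuousM; exact: cvg_id.
by apply: continuousM; [exact: cvg_cst | exact: cvg_id].
Qed.

Let E_gt0 (t : R) : 0 < t -> 0 < E t.
Proof. by move=> _; exact: expR_gt0. Qed.

Let E_le (t : R) : 0 < t -> E t <= expR ((1 - 2 * x) ^+ 2 / 4) * expR (- t).
Proof.
move=> _; rewrite -expRD ler_expR -subr_ge0.
have -> : (1 - 2 * x) ^+ 2 / 4 + - t - (- t ^+ 2 - 2 * x * t) = (t + x - 2^-1) ^+ 2.
  by field.
exact: sqr_ge0.
Qed.

Let E_deriv (t : R) : is_derive t 1 E (E t * (- (2 * t) - 2 * x)).
Proof.
apply: is_derive_eq (is_derive_expR_comp (is_deriveB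
  (is_deriveN (is_derive_mul (is_derive_id t 1) (is_derive_id t 1)))
  (is_derive_mul (is_derive_cst (2 * x) t 1) (is_derive_id t 1)))) _.
by rewrite !fctE /hermite_weight; ring.
Qed.

Lemma Hermite_moment (a : R) : 0 < a -> Hermite (- a) x = M a / Gamma a.
Proof.
move=> a_gt0; rewrite /Hermite opprK mulrC Rintegral_itv0y_cbnd//.
by have := integrable_moment E_cont E_gt0 E_le a_gt0.
Qed.

Lemma hermite_moment_gt0 (a : R) : 0 < a -> 0 < M a.
Proof. exact: (moment_gt0 E_cont E_gt0 E_le (a := a)). Qed.

Lemma hermite_moment_sqr_lt (a : R) : 0 < a -> M (a + 1) ^+ 2 < M a * M (a + 2).
Proof. exact: (moment_sqr_lt E_cont E_gt0 E_le (a := a)). Qed.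

Lemma hermite_moment_rec (a : R) : 0 < a -> a * M a = 2 * M (a + 2) + 2 * x * M (a + 1).
Proof.
move=> a_gt0; have a1_gt0 : 0 < a + 1 by rewrite addr_gt0.
have a2_gt0 : 0 < a + 2 by rewrite addr_gt0.
have int2 := integrable_itv0yZ (-2) (integrable_moment E_cont E_gt0 E_le a2_gt0).
have int1 := integrable_itv0yZ (- (2 * x)) (integrable_moment E_cont E_gt0 E_le a1_gt0).
have E'_split (t : R) : 0 < t -> t `^ a * (E t * (- (2 * t) - 2 * x)) =
    -2 * (t `^ (a + 2 - 1) * E t) + - (2 * x) * (t `^ (a + 1 - 1) * E t).
  move=> t_gt0; have -> : a + 2 - 1 = a + 1 by ring.
  by rewrite addrK powRD1//; ring.
have E'_int : mu.-integrable itv0y (EFin \o (fun t => t `^ a * (E t * (- (2 * t) - 2 * x)))).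
  by apply: eq_integrable_itv0y (integrable_itv0yD int2 int1) => t /E'_split.
have E'_cont (t : R) : 0 < t -> {for t, continuous (fun y => E y * (- (2 * y) - 2 * x))}.
  move=> _; apply: continuousM; first exact: E_cont.
  apply: continuousB; first by apply: continuousN; apply: continuousM; [exact: cvg_cst|].
  by apply: continuousM; exact: cvg_cst.
have := moment_derive E_cont E_gt0 E_le a_gt0 E_deriv E'_cont E'_int.
have -> : moment (fun t => E t * (- (2 * t) - 2 * x)) (a + 1) =
    \int[mu]_(t in itv0y) (-2 * (t `^ (a + 2 - 1) * E t) +
                           - (2 * x) * (t `^ (a + 1 - 1) * E t)).
  by apply: eq_Rintegral_itv0y => t t_gt0; rewrite -E'_split// addrK.
have M1_int := integrable_moment E_cont E_gt0 E_le a1_gt0.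
have M2_int := integrable_moment E_cont E_gt0 E_le a2_gt0.
rewrite RintegralD// !RintegralZl// -!/(M _) => M_eq.
by rewrite -[LHS]opprK -M_eq; ring.
Qed.

Lemma Hermite_gt0 (alpha : R) : alpha < 0 -> 0 < Hermite alpha x.
Proof.
move=> alpha_lt0; have a_gt0 : 0 < - alpha by rewrite oppr_gt0.
by rewrite -[alpha]opprK Hermite_moment// divr_gt0 ?hermite_moment_gt0 ?Gamma_gt0.
Qed.

Lemma Rratio_moment (s : R) : 0 < s ->
  Rratio (- s) x = (s + 1) * M (s + 1) ^+ 2 / (s * (M s * M (s + 2))).
Proof.
move=> s_gt0; have s1_gt0 : 0 < s + 1 by rewrite addr_gt0.
have s2_gt0 : 0 < s + 2 by rewrite addr_gt0.
rewrite /Rratio -!opprD !Hermite_moment//.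
have -> : s + 2 = s + 1 + 1 by rewrite -addrA.
have [G_gt0 M0_gt0] := (Gamma_gt0 s_gt0, hermite_moment_gt0 s_gt0).
have M1_gt0 := hermite_moment_gt0 s1_gt0.
have M2_gt0 := hermite_moment_gt0 (addr_gt0 s1_gt0 ltr01).
by rewrite !Gamma_succ//; field; rewrite !gt_eqF.
Qed.

End hermite_weight.

End moments.

Lemma three_term_ratio_bounds (R : realFieldType) (s x M0 M1 M2 M3 : R) :
  0 < s -> 0 < M0 -> 0 < M1 -> 0 < M2 ->
  s * M0 = 2 * M2 + 2 * x * M1 -> (s + 1) * M1 = 2 * M3 + 2 * x * M2 ->
  M1 ^+ 2 < M0 * M2 -> M2 ^+ 2 < M1 * M3 ->
  1 < (s + 1) * M1 ^+ 2 / (s * (M0 * M2)) < (s + 1) / s.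
Proof.
move=> s_gt0 M0_gt0 M1_gt0 M2_gt0 rec0 rec1 cs0 cs1.
have den_gt0 : 0 < s * (M0 * M2) by rewrite !mulr_gt0.
apply/andP; split.
- rewrite ltr_pdivlMr// mul1r.
  have := congr1 ( *%R^~ M2) rec0; have := congr1 ( *%R^~ M1) rec1.
  rewrite /= => rec1_M1 rec0_M2; nra.
- rewrite ltr_pdivrMr//.
  have -> : (s + 1) / s * (s * (M0 * M2)) = (s + 1) * (M0 * M2).
    by field; rewrite gt_eqF.
  by rewrite ltr_pM2l// addr_gt0.
Qed.

Theorem corollary3p2 (R : realType) (nu : R) (hnu : nu < 0) :
  (forall x : R, 1 < Rratio nu x /\ Rratio nu x < (nu - 1) / nu) /\
  (forall x : R, Hermite (nu - 1) x ^+ 2 - Hermite nu x * Hermite (nu - 2) x > 0).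
Proof.
have s_gt0 : 0 < - nu by rewrite oppr_gt0.
have s1_gt0 : 0 < - nu + 1 by rewrite addr_gt0.
have s2E : - nu + 1 + 1 = - nu + 2 by rewrite -addrA.
have Rratio_bounds x : 1 < Rratio nu x < (nu - 1) / nu.
  have -> : (nu - 1) / nu = (- nu + 1) / - nu by field; exact: ltr0_neq0.
  rewrite -[nu in Rratio nu]opprK Rratio_moment//.
  have := hermite_moment_rec x s1_gt0; have := hermite_moment_sqr_lt x s1_gt0.
  rewrite s2E => cs1 rec1.
  by apply: (three_term_ratio_bounds s_gt0 _ _ _ (hermite_moment_rec x s_gt0) rec1
    (hermite_moment_sqr_lt x s_gt0) cs1); apply: hermite_moment_gt0; rewrite ?addr_gt0.
split=> x; first exact/andP/Rratio_bounds.
have /andP[ratio_gt1 _] := Rratio_bounds x.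
have Hnu_gt0 alpha : alpha <= nu -> 0 < Hermite alpha x.
  by move=> alpha_le; apply: Hermite_gt0; exact: le_lt_trans hnu.
move: ratio_gt1; rewrite subr_gt0 /Rratio ltr_pdivlMr ?mul1r// mulr_gt0//.
all: by apply: Hnu_gt0; lra.
Qed.
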